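(* Let $W$ be a (1-safe) DAW-net and $\mathrm{bc}(W)$ its $\mathcal{BC}$ encoding. For any $\ell\ge0$, if $X$ is a stable model of $P_\ell(\mathrm{bc}(W))$, then $$\rho=\Phi^-_0(X)\xrightarrow{\tau_0(X)}\Phi^-_1(X)\xrightarrow{\tau_1(X)}\cdots\xrightarrow{\tau_{\ell-1}(X)}\Phi^-_\ell(X)$$ is a sequence of valid firings of $W$ of length $\ell$.
   Context: **DAW-nets.** Data model $\mathcal{D}=(\mathcal{V},\Delta,\mathrm{dm},\mathrm{ord})$: variables; finite domains via total surjective $\mathrm{dm}$; partial orders $\le_{\Delta_i}$ on some domains. Assignments: partial $\eta$ with $\eta(v)\in\mathrm{dm}(v)$. Guards $\Phi::=\mathit{true}\mid\mathrm{def}(v)\mid t_1=t_2\mid t_1\le t_2\mid\neg\Phi\mid\Phi\wedge\Phi$; with $t[\eta]=\eta(t)$ for variables on which $\eta$ is defined and $t$ otherwise: $\mathrm{def}(v)$ iff $\eta(v)$ defined; $t_1=t_2$ iff $t_1[\eta],t_2[\eta]$ are equal constants; $t_1\le t_2$ iff both lie in some ordered $\Delta_i$ and $t_1[\eta]\le_{\Delta_i}t_2[\eta]$. A DAW-net $W=\langle\mathcal{D},(P,T,F),\mathrm{wr},\mathrm{gd}\rangle$: workflow Petri net with places $\mathit{start},\mathit{sink}$ (presets ${}^\bullet t$, postsets $t^\bullet$), partial functions $\mathrm{wr}(t)$ with $\mathrm{wr}(t)(v)\subseteq\mathrm{dm}(v)$, guards $\mathrm{gd}(t)$. A firing $(M,\eta)\xrightarrow{t}(M',\eta')$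 is valid iff $\{p\mid M(p)>0\}\supseteq{}^\bullet t$; $\mathcal{D},\eta\models\mathrm{gd}(t)$; $M'(p)=M(p)-1$ on ${}^\bullet t\setminus t^\bullet$, $M(p)+1$ on $t^\bullet\setminus{}^\bullet t$, else $M(p)$; $\mathrm{dom}(\eta')=\mathrm{dom}(\eta)\cup\{v\mid\mathrm{wr}(t)(v)\ne\emptyset\}\setminus\{v\mid\mathrm{wr}(t)(v)=\emptyset\}$, $\eta'(v)\in\mathrm{wr}(t)(v)$ for $v\in\mathrm{dom}(\mathrm{wr}(t))$, else $\eta'(v)=\eta(v)$. $\mathcal{V}'$: finite set of variables of $W$; $\mathrm{adm}(v)=\bigcup_t\mathrm{wr}(t)(v)$. $W$ is assumed 1-safe. **$\mathcal{BC}$ semantics.** Laws: dynamic ''$A_0$ after $A'_1,\dots,A'_n$ ifcons $A_{n+1},\dots,A_m$'', static ''$A_0$ if ... ifcons ...'', ''initially $f=v$''. $P_\ell(B)$ is the disjunctive program (classical $\neg$, default $\sim$) containing: static laws as $i{:}A_0\leftarrow i{:}A_1,\dots,i{:}A_n,\sim\neg(i{:}A_{n+1}),\dots,\sim\neg(i{:}A_m)$, $0\le i\le\ell$; dynamic laws as $i{+}1{:}A_0\leftarrow i{:}A'_1,\dots,i{:}A'_n,\sim\neg(i{+}1{:}A_{n+1}),\dots,\sim\neg(i{+}1{:}A_m)$, $0\le i<\ell$ (constraints if $A_0$ is false); facts $0{:}f=v$ for ''initially $f=v$''; $0{:}f=v\vee\neg(0{:}f=v)$; $i{:}a\vee\neg(i{:}a)$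 for action constants, $i<\ell$; for $i\le\ell$ and fluent $f$ with domain $v_1,\dots,v_k$: $\leftarrow\sim(i{:}f=v_1),\dots,\sim(i{:}f=v_k)$ and $\neg(i{:}f=v)\leftarrow i{:}f=w$ ($v\neq w$). $\sigma_i(X)=\{f\mapsto o\mid(i{:}f=o)\in X\}$. **The encoding $\mathrm{bc}(W)$.** Fluents $v\in\mathcal{V}'$ (domain $\mathrm{adm}(v)\cup\{\mathrm{null}\}$), Boolean fluents $p\in P$ and $\mathit{trans}$; action constants $t\in T$. Laws: ''$v=o$ after $v=o$ ifcons $v=o$''; ''$p=o$ after $p=o$ ifcons $p=o$''; for each $t$: ''$p=\mathrm{false}$ after $t$'' ($p\in{}^\bullet t\setminus t^\bullet$), ''$p=\mathrm{true}$ after $t$'' ($p\in t^\bullet\setminus{}^\bullet t$), ''$v=d$ after $t$ ifcons $v=d$'' ($d\in\mathrm{wr}(t)(v)$), ''$v=\mathrm{null}$ after $t$'' ($\mathrm{wr}(t)(v)=\emptyset$), ''false after $t$ ifcons $v=d$'' ($\mathrm{wr}(t)(v)\ne\emptyset$, $d\in\{\mathrm{null}\}\cup\mathrm{adm}(v)\setminus\mathrm{wr}(t)(v)$), ''false after $t,s$'' ($t\neq s$), ''false after $t,p=\mathrm{false}$'' ($p\in{}^\bullet t$), ''$\mathit{trans}=\mathrm{true}$ after $t$''; ''initially $\mathit{start}=\mathrm{true}$'', ''initially $p=\mathrm{false}$'' ($p\ne\mathit{start}$), ''initially $v=\mathrm{null}$'', ''initially $\mathit{trans}=\mathrm{true}$'';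 and for each $t$ with $\mathrm{gd}(t)\not\equiv\mathit{true}$, for a chosen formula $\bigvee_k t^k_1\wedge\dots\wedge t^k_{n_k}$ equivalent to $\neg\mathrm{gd}(t)$ with terms $v=o$ or $\neg\mathrm{def}(v)$, the laws ''false after $t,[\![t^k_1]\!],\dots,[\![t^k_{n_k}]\!]$'', with $[\![v=o]\!]=(v=o)$, $[\![\neg\mathrm{def}(v)]\!]=(v=\mathrm{null})$. **Inverse mapping.** For a stable model $X$ of $P_\ell(\mathrm{bc}(W))$ and $0\le i\le\ell$, $\Phi^-_i(X)=(M_i,\eta_i)$ with $M_i(p)=1$ if $\sigma_i(X)(p)=\mathrm{true}$ and $M_i(p)=0$ if $\sigma_i(X)(p)=\mathrm{false}$ ($p\in P$), and $\eta_i=\{(v,o)\mid v\in\mathcal{V}',\sigma_i(X)(v)=o,o\ne\mathrm{null}\}$; for $0\le i<\ell$, $\tau_i(X)$ is the action constant $a$ with $(i{:}a)\in X$. *)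

From Stdlib Require Import List Relations ClassicalEpsilon.
Import ListNotations.

Record data_model := DataModel {
  dvar : Type;
  dconst : Type;
  ddomain : Type;                   (* index set of the domains Delta *)
  dvals : ddomain -> list dconst;
  dm : dvar -> ddomain;
  dord : ddomain -> option (dconst -> dconst -> Prop)
}.

Definition partial_order_on {C : Type} (A : list C) (R : C -> C -> Prop) : Prop :=
  (forall x, In x A -> R x x) /\
  (forall x y, In x A -> In y A -> R x y -> R y x -> x = y) /\
  (forall x y z, In x A -> In y A -> In z A -> R x y -> R y z -> R x z).

Definition wf_data_model (D : data_model) : Prop :=
  (forall d : ddomain D, exists v, dm D v = d) /\
  (forall d R, dord D d = Some R -> partial_order_on (dvals D d) R).

Inductive term (D : data_model) :=
| TVar : dvar D -> term D
| TConst : dconst D -> term D.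
Arguments TVar {D}. Arguments TConst {D}.

Inductive guard (D : data_model) :=
| GTrue : guard D
| GDef : dvar D -> guard D
| GEq : term D -> term D -> guard D
| GLe : term D -> term D -> guard D
| GNot : guard D -> guard D
| GAnd : guard D -> guard D -> guard D.
Arguments GTrue {D}. Arguments GDef {D}. Arguments GEq {D}.
Arguments GLe {D}. Arguments GNot {D}. Arguments GAnd {D}.

(* (partial) assignments: eta v = None means eta undefined on v *)
Definition assignment (D : data_model) := dvar D -> option (dconst D).

Definition is_assignment (D : data_model) (eta : assignment D) : Prop :=
  forall v c, eta v = Some c -> In c (dvals D (dm D v)).

(* t[eta] when it is a constant (None: t[eta] is an undefined variable) *)
Definition tconst {D : data_model} (eta : assignment D) (t : term D)
  : option (dconst D) :=
  match t with TVar v => eta v | TConst c => Some c end.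

Fixpoint gsat {D : data_model} (eta : assignment D) (g : guard D) : Prop :=
  match g with
  | GTrue => True
  | GDef v => eta v <> None
  | GEq t1 t2 => exists c, tconst eta t1 = Some c /\ tconst eta t2 = Some c
  | GLe t1 t2 => exists d R c1 c2,
      dord D d = Some R /\ tconst eta t1 = Some c1 /\ tconst eta t2 = Some c2 /\
      In c1 (dvals D d) /\ In c2 (dvals D d) /\ R c1 c2
  | GNot g1 => ~ gsat eta g1
  | GAnd g1 g2 => gsat eta g1 /\ gsat eta g2
  end.

Definition term_occ {D : data_model} (v : dvar D) (t : term D) : Prop :=
  match t with TVar w => w = v | TConst _ => False end.

Fixpoint gvar_occ {D : data_model} (v : dvar D) (g : guard D) : Prop :=
  match g with
  | GTrue => False
  | GDef w => w = v
  | GEq t1 t2 | GLe t1 t2 => term_occ v t1 \/ term_occ v t2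
  | GNot g1 => gvar_occ v g1
  | GAnd g1 g2 => gvar_occ v g1 \/ gvar_occ v g2
  end.

Record dawnet (D : data_model) := DAWNet {
  place : Type;
  trans : Type;
  pre : place -> trans -> Prop;
  post : trans -> place -> Prop;
  start : place;
  sink : place;
  wr : trans -> dvar D -> option (list (dconst D));
      (* partial function wr(t): None = undefined on v; Some l = the set l *)
  gd : trans -> guard D
}.
Arguments place {D}. Arguments trans {D}. Arguments pre {D}.
Arguments post {D}. Arguments start {D}. Arguments sink {D}.
Arguments wr {D}. Arguments gd {D}.

Inductive node {D : data_model} (W : dawnet D) :=
| NP : place W -> node W
| NT : trans W -> node W.
Arguments NP {D W}. Arguments NT {D W}.

Inductive flow {D : data_model} (W : dawnet D) : node W -> node W -> Prop :=
| flow_pt : forall p t, pre W p t -> flow W (NP p) (NT t)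
| flow_tp : forall t p, post W t p -> flow W (NT t) (NP p).

Definition is_dawnet {D : data_model} (W : dawnet D) : Prop :=
  wf_data_model D /\
  (exists lp, forall p : place W, In p lp) /\
  (exists lt, forall t : trans W, In t lt) /\
  (forall t, ~ post W t (start W)) /\
  (forall t, ~ pre W (sink W) t) /\
  (forall x : node W, clos_refl_trans _ (flow W) (NP (start W)) x /\
                      clos_refl_trans _ (flow W) x (NP (sink W))) /\
  (forall t v l c, wr W t v = Some l -> In c l -> In c (dvals D (dm D v))) /\
  (forall t, exists lv, forall v, wr W t v <> None -> In v lv).

Definition marking {D : data_model} (W : dawnet D) := place W -> nat.

Definition wr_nonempty {D : data_model} (W : dawnet D) t v : Prop :=
  exists l c, wr W t v = Some l /\ In c l.
Definition wr_empty {D : data_model} (W : dawnet D) t v : Prop :=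
  exists l, wr W t v = Some l /\ forall c, ~ In c l.

Definition valid_firing {D : data_model} (W : dawnet D)
    (M : marking W) (eta : assignment D) (t : trans W)
    (M' : marking W) (eta' : assignment D) : Prop :=
  (forall p, pre W p t -> M p > 0) /\
  gsat eta (gd W t) /\
  (forall p,
     (pre W p t /\ ~ post W t p -> M' p = M p - 1) /\
     (post W t p /\ ~ pre W p t -> M' p = M p + 1) /\
     (~ (pre W p t /\ ~ post W t p) -> ~ (post W t p /\ ~ pre W p t) ->
        M' p = M p)) /\
  (forall v, eta' v <> None <->
             ((eta v <> None \/ wr_nonempty W t v) /\ ~ wr_empty W t v)) /\
  (forall v l c, wr W t v = Some l -> eta' v = Some c -> In c l) /\
  (forall v, wr W t v = None -> eta' v = eta v).

Inductive reachable {D : data_model} (W : dawnet D)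
  : marking W -> assignment D -> Prop :=
| reach_init : forall (M : marking W) (eta : assignment D),
    M (start W) = 1 -> (forall p, p <> start W -> M p = 0) ->
    (forall v, eta v = None) -> reachable W M eta
| reach_step : forall M eta t M' eta',
    reachable W M eta -> valid_firing W M eta t M' eta' -> reachable W M' eta'.

Definition one_safe {D : data_model} (W : dawnet D) : Prop :=
  forall M eta, reachable W M eta -> forall p, M p <= 1.

Definition inV' {D : data_model} (W : dawnet D) (v : dvar D) : Prop :=
  (exists t, wr W t v <> None) \/ (exists t, gvar_occ v (gd W t)).

Definition adm {D : data_model} (W : dawnet D) (v : dvar D) (c : dconst D) : Prop :=
  exists t l, wr W t v = Some l /\ In c l.

Section BC.
Variables Fl Ac Val : Type.

(* BC atoms: f = x for a fluent f, or a (i.e. a = true) for an action a *)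
Inductive batom := BF (f : Fl) (x : Val) | BA (a : Ac).

(* "A0 if A1..An ifcons A(n+1)..Am" ; head None = false *)
Record static_law := StaticLaw {
  sl_head : option (Fl * Val); sl_if : list batom; sl_ifcons : list batom }.
(* "A0 after A1'..An' ifcons A(n+1)..Am" ; head None = false *)
Record dynamic_law := DynamicLaw {
  dl_head : option (Fl * Val); dl_after : list batom; dl_ifcons : list batom }.

Record bc_desc := BCDesc {
  bc_fluent : Fl -> Prop;
  bc_dom : Fl -> Val -> Prop;
  bc_action : Ac -> Prop;
  bc_static : static_law -> Prop;
  bc_dynamic : dynamic_law -> Prop;
  bc_initially : Fl -> Val -> Prop
}.

Inductive patom := PA (i : nat) (A : batom).
Inductive lit := LPos (a : patom) | LNeg (a : patom).

(* head: disjunction; pos: positive body; neg: literals L occurring as ~L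
   (default negation) in the body *)
Record rule := Rule { r_head : list lit; r_pos : list lit; r_neg : list lit }.

Definition at_ (i : nat) (A : batom) : lit := LPos (PA i A).
Definition cneg (i : nat) (A : batom) : lit := LNeg (PA i A).

Definition head_lits (i : nat) (h : option (Fl * Val)) : list lit :=
  match h with Some (f, x) => [at_ i (BF f x)] | None => [] end.

Inductive P_ell (B : bc_desc) (ell : nat) : rule -> Prop :=
| P_static : forall L i, bc_static B L -> i <= ell ->
    P_ell B ell (Rule (head_lits i (sl_head L)) (map (at_ i) (sl_if L))
                      (map (cneg i) (sl_ifcons L)))
| P_dynamic : forall L i, bc_dynamic B L -> i < ell ->
    P_ell B ell (Rule (head_lits (S i) (dl_head L)) (map (at_ i) (dl_after L))
                      (map (cneg (S i)) (dl_ifcons L)))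
| P_init : forall f x, bc_initially B f x ->
    P_ell B ell (Rule [at_ 0 (BF f x)] [] [])
| P_init_choice : forall f x, bc_fluent B f -> bc_dom B f x ->
    P_ell B ell (Rule [at_ 0 (BF f x); cneg 0 (BF f x)] [] [])
| P_act_choice : forall a i, bc_action B a -> i < ell ->
    P_ell B ell (Rule [at_ i (BA a); cneg i (BA a)] [] [])
| P_exist : forall f i (l : list Val), bc_fluent B f -> i <= ell ->
    (forall x, In x l <-> bc_dom B f x) ->
    P_ell B ell (Rule [] [] (map (fun x => at_ i (BF f x)) l))
| P_uniq : forall f i x y, bc_fluent B f -> i <= ell ->
    bc_dom B f x -> bc_dom B f y -> x <> y ->
    P_ell B ell (Rule [cneg i (BF f x)] [at_ i (BF f y)] []).

(* stable models (answer sets) of a disjunctive program with classical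
   negation; sets of literals are predicates *)
Definition program := rule -> Prop.

Definition consistent (X : lit -> Prop) : Prop :=
  forall a, ~ (X (LPos a) /\ X (LNeg a)).

Definition closed_reduct (P : program) (X Y : lit -> Prop) : Prop :=
  forall r, P r ->
    (forall l, In l (r_neg r) -> ~ X l) ->
    (forall l, In l (r_pos r) -> Y l) ->
    exists l, In l (r_head r) /\ Y l.

Definition stable_model (P : program) (X : lit -> Prop) : Prop :=
  consistent X /\ closed_reduct P X X /\
  (forall Y : lit -> Prop, (forall l, Y l -> X l) -> closed_reduct P X Y ->
     forall l, X l -> Y l).

End BC.

Arguments BF {Fl Ac Val}. Arguments BA {Fl Ac Val}.
Arguments DynamicLaw {Fl Ac Val}. Arguments PA {Fl Ac Val}.
Arguments LPos {Fl Ac Val}. Arguments LNeg {Fl Ac Val}.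
Arguments BCDesc {Fl Ac Val}.
Arguments P_ell {Fl Ac Val}. Arguments stable_model {Fl Ac Val}.
Arguments consistent {Fl Ac Val}. Arguments closed_reduct {Fl Ac Val}.
Arguments Rule {Fl Ac Val}. Arguments at_ {Fl Ac Val}. Arguments cneg {Fl Ac Val}.

Inductive fluent {D : data_model} (W : dawnet D) :=
| FVar : dvar D -> fluent W
| FPlace : place W -> fluent W
| FTrans : fluent W.
Arguments FVar {D W}. Arguments FPlace {D W}. Arguments FTrans {D W}.

Inductive fval (D : data_model) := VNull | VC (c : dconst D) | VB (b : bool).
Arguments VNull {D}. Arguments VC {D}. Arguments VB {D}.

(* literals of the chosen DNF of the negated guard: v = o  or  not def(v) *)
Inductive glit (D : data_model) := GLEq (v : dvar D) (o : dconst D) | GLUndef (v : dvar D).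
Arguments GLEq {D}. Arguments GLUndef {D}.

Definition glsat {D : data_model} (eta : assignment D) (l : glit D) : Prop :=
  match l with GLEq v o => eta v = Some o | GLUndef v => eta v = None end.

Definition glvar {D : data_model} (l : glit D) : dvar D :=
  match l with GLEq v _ => v | GLUndef v => v end.

Definition guard_not_true {D : data_model} (W : dawnet D) (t : trans W) : Prop :=
  exists eta, is_assignment D eta /\ ~ gsat eta (gd W t).

Definition chosen_neg_dnf {D : data_model} (W : dawnet D)
    (ngd : trans W -> list (list (glit D))) : Prop :=
  forall t, guard_not_true W t ->
    (forall eta, is_assignment D eta ->
       (~ gsat eta (gd W t) <->
        exists k, In k (ngd t) /\ forall l, In l k -> glsat eta l)) /\
    (forall k l, In k (ngd t) -> In l k -> inV' W (glvar l)).

Definition glit_atom {D : data_model} {W : dawnet D} (l : glit D)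
  : batom (fluent W) (trans W) (fval D) :=
  match l with
  | GLEq v o => BF (FVar v) (VC o)
  | GLUndef v => BF (FVar v) VNull
  end.

Definition bc_is_fluent {D : data_model} (W : dawnet D) (f : fluent W) : Prop :=
  match f with FVar v => inV' W v | _ => True end.

Definition bc_fdom {D : data_model} (W : dawnet D) (f : fluent W) (x : fval D) : Prop :=
  match f with
  | FVar v => x = VNull \/ exists c, x = VC c /\ adm W v c
  | FPlace _ | FTrans => exists b, x = VB b
  end.

Inductive bc_dyn {D : data_model} (W : dawnet D)
    (ngd : trans W -> list (list (glit D)))
  : dynamic_law (fluent W) (trans W) (fval D) -> Prop :=
| dyn_inertia_var : forall v o, inV' W v -> bc_fdom W (FVar v) o ->
    bc_dyn W ngd (DynamicLaw (Some (FVar v, o)) [BF (FVar v) o] [BF (FVar v) o])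
| dyn_inertia_place : forall p b,
    bc_dyn W ngd (DynamicLaw (Some (FPlace p, VB b)) [BF (FPlace p) (VB b)]
                             [BF (FPlace p) (VB b)])
| dyn_consume : forall t p, pre W p t -> ~ post W t p ->
    bc_dyn W ngd (DynamicLaw (Some (FPlace p, VB false)) [BA t] [])
| dyn_produce : forall t p, post W t p -> ~ pre W p t ->
    bc_dyn W ngd (DynamicLaw (Some (FPlace p, VB true)) [BA t] [])
| dyn_write : forall t v l d, wr W t v = Some l -> In d l ->
    bc_dyn W ngd (DynamicLaw (Some (FVar v, VC d)) [BA t] [BF (FVar v) (VC d)])
| dyn_delete : forall t v, wr_empty W t v ->
    bc_dyn W ngd (DynamicLaw (Some (FVar v, VNull)) [BA t] [])
| dyn_write_excl : forall t v l d, wr W t v = Some l -> (exists c, In c l) ->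
    (d = VNull \/ exists c, d = VC c /\ adm W v c /\ ~ In c l) ->
    bc_dyn W ngd (DynamicLaw None [BA t] [BF (FVar v) d])
| dyn_one_action : forall t s, t <> s ->
    bc_dyn W ngd (DynamicLaw None [BA t; BA s] [])
| dyn_enabled : forall t p, pre W p t ->
    bc_dyn W ngd (DynamicLaw None [BA t; BF (FPlace p) (VB false)] [])
| dyn_trans : forall t,
    bc_dyn W ngd (DynamicLaw (Some (FTrans, VB true)) [BA t] [])
| dyn_guard : forall t k, guard_not_true W t -> In k (ngd t) ->
    bc_dyn W ngd (DynamicLaw None (BA t :: map glit_atom k) []).

Inductive bc_init {D : data_model} (W : dawnet D) : fluent W -> fval D -> Prop :=
| init_start : bc_init W (FPlace (start W)) (VB true)
| init_place : forall p, p <> start W -> bc_init W (FPlace p) (VB false)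
| init_var : forall v, inV' W v -> bc_init W (FVar v) VNull
| init_trans : bc_init W FTrans (VB true).

Definition bc {D : data_model} (W : dawnet D)
    (ngd : trans W -> list (list (glit D)))
  : bc_desc (fluent W) (trans W) (fval D) :=
  BCDesc (bc_is_fluent W) (bc_fdom W) (fun _ => True) (fun _ => False)
         (bc_dyn W ngd) (bc_init W).

Definition bclit {D : data_model} (W : dawnet D) :=
  lit (fluent W) (trans W) (fval D).

Definition Phi_M {D : data_model} {W : dawnet D} (X : bclit W -> Prop) (i : nat)
  : marking W :=
  fun p => if excluded_middle_informative
                (X (LPos (PA i (BF (FPlace p) (VB true)))))
           then 1 else 0.

Definition Phi_eta {D : data_model} {W : dawnet D} (X : bclit W -> Prop) (i : nat)
  : assignment D :=
  fun v =>
    match excluded_middle_informative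
            (exists c, inV' W v /\ X (LPos (PA i (BF (FVar v) (VC c)))))
    with
    | left H => Some (proj1_sig (constructive_indefinite_description _ H))
    | right _ => None
    end.

Definition tau_is {D : data_model} {W : dawnet D} (X : bclit W -> Prop) (i : nat)
    (t : trans W) : Prop :=
  X (LPos (PA i (BA t))).

From Stdlib Require Import List ClassicalEpsilon Classical Arith Lia.
Import ListNotations.

(* Every atom of a stable model is supported by a rule of P_ell whose body
   holds.  bc(W) has no static laws, so an atom "f = x" at step i+1 is
   supported either by an inertia law (f = x already held at step i) or by an
   effect law of the unique action t occurring at step i; together with the
   existence and uniqueness rules of P_ell, which make every fluent
   single-valued, this lets Phi^- read off a well-defined marking and
   assignment.  The constraint laws of bc(W) yield the enabling, guard and
   write-range conditions of firing t, and the effect and inertia laws yield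
   the updates.  Markings are encoded as Booleans, so a place produced by t
   must be unmarked before t fires: this is where 1-safety enters, applied to
   the configuration at step i, which is reachable by induction. *)

Arguments r_head {Fl Ac Val}. Arguments r_pos {Fl Ac Val}. Arguments r_neg {Fl Ac Val}.
Arguments dl_head {Fl Ac Val}. Arguments dl_after {Fl Ac Val}.
Arguments dl_ifcons {Fl Ac Val}.
Arguments bc_fluent {Fl Ac Val}. Arguments bc_dom {Fl Ac Val}.
Arguments bc_static {Fl Ac Val}. Arguments bc_dynamic {Fl Ac Val}.
Arguments bc_initially {Fl Ac Val}.

Section StableModel.
Context {Fl Ac Val : Type} {P : program Fl Ac Val} {X : lit Fl Ac Val -> Prop}.
Hypothesis HX : stable_model P X.

Lemma stable_model_consistent a : X (LPos a) -> X (LNeg a) -> False.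
Proof. intros Hpos Hneg; exact (proj1 HX a (conj Hpos Hneg)). Qed.

Lemma stable_model_closed r :
  P r -> Forall X (r_pos r) -> Forall (fun l => ~ X l) (r_neg r) ->
  exists l, In l (r_head r) /\ X l.
Proof.
  rewrite !Forall_forall; intros Hr Hpos Hneg.
  exact (proj1 (proj2 HX) r Hr Hneg Hpos).
Qed.

(* By minimality: otherwise X minus l would still be closed under the reduct. *)
Lemma stable_model_supported l :
  X l -> exists r, P r /\ In l (r_head r) /\
    Forall X (r_pos r) /\ Forall (fun l' => ~ X l') (r_neg r).
Proof.
  intros Hl; apply NNPP; intros Hunsupp.
  destruct HX as [_ [Hclosed Hmin]].
  enough (Hsmaller : closed_reduct P X (fun l' => X l' /\ l' <> l)).
  { exact (proj2 (Hmin _ (fun l' H => proj1 H) Hsmaller l Hl) eq_refl). }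
  intros r Hr Hneg Hpos.
  assert (HposX : forall l', In l' (r_pos r) -> X l') by (intros; apply Hpos; auto).
  destruct (Hclosed r Hr Hneg HposX) as [l' [Hin HXl']].
  exists l'; repeat split; auto; intros ->.
  apply Hunsupp; exists r; rewrite !Forall_forall; auto.
Qed.

End StableModel.

Definition typed_dynamic_desc {Fl Ac Val : Type} (B : bc_desc Fl Ac Val) : Prop :=
  (forall L, ~ bc_static B L) /\
  (forall f x, bc_initially B f x -> bc_dom B f x) /\
  (forall L f x, bc_dynamic B L -> dl_head L = Some (f, x) -> bc_dom B f x).

Section Translation.
Context {Fl Ac Val : Type} {B : bc_desc Fl Ac Val} {ell : nat}
        {X : lit Fl Ac Val -> Prop}.
Hypothesis HB : typed_dynamic_desc B.
Hypothesis HX : stable_model (P_ell B ell) X.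

Lemma initially_holds f x : bc_initially B f x -> X (at_ 0 (BF f x)).
Proof.
  intros Hinit.
  destruct (stable_model_closed HX _ (P_init _ _ _ B ell f x Hinit)) as [l [Hl HXl]];
    simpl; auto.
  destruct Hl as [<- | []]; exact HXl.
Qed.

Lemma dynamic_law_closed L i :
  bc_dynamic B L -> i < ell ->
  Forall (fun A => X (at_ i A)) (dl_after L) ->
  Forall (fun A => ~ X (cneg (S i) A)) (dl_ifcons L) ->
  exists f x, dl_head L = Some (f, x) /\ X (at_ (S i) (BF f x)).
Proof.
  intros HL Hi Hafter Hifcons.
  destruct (stable_model_closed HX _ (P_dynamic _ _ _ B ell L i HL Hi))
    as [l [Hl HXl]]; simpl.
  - exact (proj2 (Forall_map (at_ i) X _) Hafter).
  - exact (proj2 (Forall_map (cneg (S i)) _ _) Hifcons).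
  - destruct (dl_head L) as [[f x] |]; simpl in Hl; [| contradiction].
    destruct Hl as [<- | []]; eauto.
Qed.

Lemma dynamic_law_fires L i f x :
  bc_dynamic B L -> dl_head L = Some (f, x) -> i < ell ->
  Forall (fun A => X (at_ i A)) (dl_after L) ->
  Forall (fun A => ~ X (cneg (S i) A)) (dl_ifcons L) ->
  X (at_ (S i) (BF f x)).
Proof.
  intros HL Hhead Hi Hafter Hifcons.
  destruct (dynamic_law_closed L i HL Hi Hafter Hifcons) as [f' [x' [Hhead' HXfx]]].
  rewrite Hhead in Hhead'; injection Hhead' as -> ->; exact HXfx.
Qed.

Lemma dynamic_constraint L i :
  bc_dynamic B L -> dl_head L = None -> i < ell ->
  Forall (fun A => X (at_ i A)) (dl_after L) ->
  Forall (fun A => ~ X (cneg (S i) A)) (dl_ifcons L) -> False.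
Proof.
  intros HL Hhead Hi Hafter Hifcons.
  destruct (dynamic_law_closed L i HL Hi Hafter Hifcons) as [f [x [Hhead' _]]].
  congruence.
Qed.

Lemma fluent_value_exists i f dom :
  bc_fluent B f -> i <= ell -> (forall x, In x dom <-> bc_dom B f x) ->
  exists x, X (at_ i (BF f x)).
Proof.
  intros Hf Hi Hdom; apply NNPP; intros Hnone.
  destruct (stable_model_closed HX _ (P_exist _ _ _ B ell f i dom Hf Hi Hdom))
    as [l [[] _]]; simpl; auto.
  apply Forall_map, Forall_forall; intros x _ HXx; eauto.
Qed.

Lemma fluent_atom_supported i f x :
  X (at_ i (BF f x)) ->
  (i = 0 /\ (bc_initially B f x \/ bc_dom B f x)) \/
  (exists j L, i = S j /\ j < ell /\ bc_dynamic B L /\ dl_head L = Some (f, x) /\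
     Forall (fun A => X (at_ j A)) (dl_after L) /\
     Forall (fun A => ~ X (cneg i A)) (dl_ifcons L)).
Proof.
  intros HXfx.
  destruct (stable_model_supported HX _ HXfx) as [r [Hr [Hhead [Hpos Hneg]]]].
  destruct Hr as [L j HL _ | L j HL Hj | f' x' Hinit | f' x' _ Hdom | a j _ _
                 | f' j dom _ _ _ | f' j x' y' _ _ _ _ _]; simpl in *.
  - exfalso; exact (proj1 HB L HL).
  - destruct (dl_head L) as [[f' x'] |] eqn:Hh; simpl in Hhead; [| contradiction].
    destruct Hhead as [Heq | []]; injection Heq as <- -> ->.
    rewrite (Forall_map (at_ j)) in Hpos; rewrite (Forall_map (cneg (S j))) in Hneg.
    right; exists j, L; repeat split; assumption.
  - destruct Hhead as [Heq | []]; injection Heq as <- -> ->; auto.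
  - destruct Hhead as [Heq | [Heq | []]]; [injection Heq as <- -> -> | discriminate].
    auto.
  - destruct Hhead as [Heq | [Heq | []]]; discriminate.
  - contradiction.
  - destruct Hhead as [Heq | []]; discriminate.
Qed.

Lemma fluent_succ_supported i f x :
  X (at_ (S i) (BF f x)) ->
  exists L, bc_dynamic B L /\ dl_head L = Some (f, x) /\
    Forall (fun A => X (at_ i A)) (dl_after L) /\
    Forall (fun A => ~ X (cneg (S i) A)) (dl_ifcons L).
Proof.
  intros HXfx.
  destruct (fluent_atom_supported _ _ _ HXfx)
    as [[Hzero _] | [j [L [Hj [_ HL]]]]]; [discriminate |].
  injection Hj as <-; eauto.
Qed.

Lemma fluent_value_in_dom i f x : X (at_ i (BF f x)) -> bc_dom B f x.
Proof.
  intros HXfx.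
  destruct (fluent_atom_supported _ _ _ HXfx)
    as [[_ [Hinit | Hdom]] | [j [L [_ [_ [HL [Hhead _]]]]]]].
  - exact (proj1 (proj2 HB) f x Hinit).
  - exact Hdom.
  - exact (proj2 (proj2 HB) L f x HL Hhead).
Qed.

Lemma fluent_value_unique i f x y :
  bc_fluent B f -> i <= ell -> X (at_ i (BF f x)) -> X (at_ i (BF f y)) -> x = y.
Proof.
  intros Hf Hi HXx HXy; apply NNPP; intros Hxy.
  assert (Hr := P_uniq _ _ _ B ell f i x y Hf Hi
                  (fluent_value_in_dom _ _ _ HXx) (fluent_value_in_dom _ _ _ HXy) Hxy).
  destruct (stable_model_closed HX _ Hr) as [l [[<- | []] HXl]]; simpl; auto.
  exact (stable_model_consistent HX _ HXx HXl).
Qed.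

End Translation.

Definition marking_update {D : data_model} (W : dawnet D)
    (M : marking W) (t : trans W) (M' : marking W) : Prop :=
  forall p,
    (pre W p t /\ ~ post W t p -> M' p = M p - 1) /\
    (post W t p /\ ~ pre W p t -> M' p = M p + 1) /\
    (~ (pre W p t /\ ~ post W t p) -> ~ (post W t p /\ ~ pre W p t) ->
       M' p = M p).

Definition assignment_update {D : data_model} (W : dawnet D)
    (eta : assignment D) (t : trans W) (eta' : assignment D) : Prop :=
  (forall v, eta' v <> None <->
             ((eta v <> None \/ wr_nonempty W t v) /\ ~ wr_empty W t v)) /\
  (forall v l c, wr W t v = Some l -> eta' v = Some c -> In c l) /\
  (forall v, wr W t v = None -> eta' v = eta v).

Section Firing.
Context {D : data_model} {W : dawnet D}.

Lemma valid_firingI M eta t M' eta' :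
  (forall p, pre W p t -> M p > 0) -> gsat eta (gd W t) ->
  marking_update W M t M' -> assignment_update W eta t eta' ->
  valid_firing W M eta t M' eta'.
Proof.
  intros Henabled Hguard HM Heta; exact (conj Henabled (conj Hguard (conj HM Heta))).
Qed.

Lemma marking_update_exists M t : exists M', marking_update W M t M'.
Proof.
  exists (fun p =>
    if excluded_middle_informative (pre W p t /\ ~ post W t p) then M p - 1
    else if excluded_middle_informative (post W t p /\ ~ pre W p t) then M p + 1
    else M p).
  intros p; repeat split; intros;
    repeat destruct excluded_middle_informative; tauto.
Qed.

Lemma one_safe_postset_unmarked M eta t eta' p :
  one_safe W -> reachable W M eta ->
  (forall q, pre W q t -> M q > 0) -> gsat eta (gd W t) ->
  assignment_update W eta t eta' ->
  post W t p -> ~ pre W p t -> M p = 0.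
Proof.
  intros Hsafe Hreach Henabled Hguard Heta Hpost Hpre.
  destruct (marking_update_exists M t) as [M' HM'].
  assert (Hfire := valid_firingI _ _ _ _ _ Henabled Hguard HM' Heta).
  assert (Hbound := Hsafe _ _ (reach_step W _ _ _ _ _ Hreach Hfire) p).
  rewrite (proj1 (proj2 (HM' p)) (conj Hpost Hpre)) in Hbound; lia.
Qed.

End Firing.

Lemma bc_typed_dynamic {D : data_model} {W : dawnet D} {ngd} :
  typed_dynamic_desc (bc W ngd).
Proof.
  split; [| split].
  - intros L [].
  - intros f x []; simpl; eauto.
  - intros L f x HL Hhead.
    destruct HL as [| | | | t v l d Hwr Hd | | | | | |]; simpl in Hhead;
      try discriminate; injection Hhead as <- <-; simpl; eauto.
    right; exists d; split; [reflexivity | exists t, l; auto].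
Qed.

Definition fval_const {D : data_model} (x : fval D) : option (dconst D) :=
  match x with VC c => Some c | _ => None end.

Definition adm_list {D : data_model} (W : dawnet D) (lt : list (trans W))
    (v : dvar D) : list (dconst D) :=
  flat_map (fun t => match wr W t v with Some l => l | None => [] end) lt.

Lemma in_adm_list {D : data_model} (W : dawnet D) (lt : list (trans W)) v c :
  (forall t, In t lt) -> In c (adm_list W lt v) <-> adm W v c.
Proof.
  intros Hlt; unfold adm_list; rewrite in_flat_map; split.
  - intros [t [_ Hc]]; destruct (wr W t v) as [l |] eqn:Hwr; [| destruct Hc].
    exists t, l; auto.
  - intros [t [l [Hwr Hc]]]; exists t; rewrite Hwr; auto.
Qed.

Section Encoding.
Context {D : data_model} {W : dawnet D} {ngd : trans W -> list (list (glit D))}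
        {ell : nat} {X : bclit W -> Prop}.
Hypothesis HX : stable_model (P_ell (bc W ngd) ell) X.

Lemma bc_value_in_dom i f x : X (at_ i (BF f x)) -> bc_fdom W f x.
Proof. exact (fluent_value_in_dom bc_typed_dynamic HX i f x). Qed.

Lemma bc_value_unique i f x y :
  bc_is_fluent W f -> i <= ell -> X (at_ i (BF f x)) -> X (at_ i (BF f y)) -> x = y.
Proof. exact (fluent_value_unique bc_typed_dynamic HX i f x y). Qed.

Lemma bool_value_exists i f :
  (forall v, f <> FVar v) -> i <= ell -> exists b, X (at_ i (BF f (VB b))).
Proof.
  intros Hf Hi.
  assert (Hbool : bc_is_fluent W f /\
                  forall x, In x [VB true; VB false] <-> bc_fdom W f x).
  { destruct f as [v | p |]; [exfalso; exact (Hf v eq_refl) | |];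
      split; simpl; auto; intros x; split;
      solve [intros [<- | [<- | []]]; eauto | intros [[|] ->]; auto]. }
  destruct Hbool as [Hfluent Hdom].
  destruct (fluent_value_exists HX i f _ Hfluent Hi Hdom) as [x HXx].
  destruct f as [v | p |]; [exfalso; exact (Hf v eq_refl) | |];
    destruct (bc_value_in_dom _ _ _ HXx) as [b ->]; eauto.
Qed.

Variable lt : list (trans W).
Hypothesis Hlt : forall t, In t lt.

Lemma var_value_exists i v :
  i <= ell -> inV' W v ->
  exists x, bc_fdom W (FVar v) x /\ X (at_ i (BF (FVar v) x)).
Proof.
  intros Hi Hv.
  assert (Hdom : forall x : fval D, In x (VNull :: map VC (adm_list W lt v)) <->
                           bc_fdom W (FVar v) x).
  { intros x; simpl; rewrite in_map_iff; split.
    - intros [<- | [c [<- Hc]]]; auto.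
      right; exists c; split; [reflexivity | apply (in_adm_list W lt v c Hlt), Hc].
    - intros [<- | [c [-> Hc]]]; auto.
      right; exists c; split; [reflexivity | apply (in_adm_list W lt v c Hlt), Hc]. }
  destruct (fluent_value_exists HX i (FVar v) _ Hv Hi Hdom) as [x HXx].
  exists x; split; [exact (bc_value_in_dom _ _ _ HXx) | exact HXx].
Qed.

Lemma Phi_M_boolean i p : Phi_M X i p <= 1.
Proof. unfold Phi_M; destruct excluded_middle_informative; lia. Qed.

Lemma Phi_M_value i p b :
  i <= ell -> X (at_ i (BF (FPlace p) (VB b))) -> Phi_M X i p = Nat.b2n b.
Proof.
  intros Hi HXb; unfold Phi_M; destruct excluded_middle_informative as [Htrue | Hntrue].
  - assert (Hb := bc_value_unique i (FPlace p) _ _ I Hi Htrue HXb).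
    injection Hb as <-; reflexivity.
  - destruct b; [contradiction | reflexivity].
Qed.

Lemma Phi_eta_some i v c :
  Phi_eta X i v = Some c -> inV' W v /\ X (at_ i (BF (FVar v) (VC c))).
Proof.
  unfold Phi_eta; destruct excluded_middle_informative as [Hex |]; [| discriminate].
  destruct (constructive_indefinite_description _ Hex) as [c' Hc']; simpl.
  intros Hc; injection Hc as <-; exact Hc'.
Qed.

Lemma Phi_eta_outside i v : ~ inV' W v -> Phi_eta X i v = None.
Proof.
  intros Hv; destruct (Phi_eta X i v) as [c |] eqn:Hc; [| reflexivity].
  exfalso; exact (Hv (proj1 (Phi_eta_some _ _ _ Hc))).
Qed.

Lemma Phi_eta_value i v x :
  i <= ell -> inV' W v -> X (at_ i (BF (FVar v) x)) -> Phi_eta X i v = fval_const x.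
Proof.
  intros Hi Hv HXx; destruct (Phi_eta X i v) as [c |] eqn:Hc.
  - destruct (Phi_eta_some _ _ _ Hc) as [_ HXc].
    rewrite <- (bc_value_unique i (FVar v) _ _ Hv Hi HXc HXx); reflexivity.
  - destruct x as [| c |]; try reflexivity.
    unfold Phi_eta in Hc; destruct excluded_middle_informative as [| Hnone];
      [discriminate | exfalso; eauto].
Qed.

Lemma place_succ_supported i p b :
  X (at_ (S i) (BF (FPlace p) (VB b))) ->
  X (at_ i (BF (FPlace p) (VB b))) \/
  exists t, X (at_ i (BA t)) /\
    ((pre W p t /\ ~ post W t p /\ b = false) \/
     (post W t p /\ ~ pre W p t /\ b = true)).
Proof.
  intros HXb.
  destruct (fluent_succ_supported bc_typed_dynamic HX _ _ _ HXb)
    as [L [HL [Hhead [Hafter _]]]].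
  destruct HL as [| p' b' | t p' Hpre Hpost | t p' Hpost Hpre | | | | | | |];
    simpl in Hhead; try discriminate; injection Hhead as <- <-;
    apply Forall_inv in Hafter.
  - left; exact Hafter.
  - right; exists t; auto.
  - right; exists t; auto.
Qed.

Lemma var_succ_supported i v x :
  X (at_ (S i) (BF (FVar v) x)) ->
  X (at_ i (BF (FVar v) x)) \/ exists t, X (at_ i (BA t)) /\ wr W t v <> None.
Proof.
  intros HXx.
  destruct (fluent_succ_supported bc_typed_dynamic HX _ _ _ HXx)
    as [L [HL [Hhead [Hafter _]]]].
  destruct HL as [v' x' | | | | t v' l d Hwr _ | t v' [l [Hwr _]] | | | | |];
    simpl in Hhead; try discriminate; injection Hhead as <- <-;
    apply Forall_inv in Hafter.
  - left; exact Hafter.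
  - right; exists t; split; congruence.
  - right; exists t; split; congruence.
Qed.

(* The fluent [trans] has a value at step i+1 but no inertia law: the only
   law that can support it is "trans = true after t" for an action t. *)
Lemma action_exists i : i < ell -> exists t, X (at_ i (BA t)).
Proof.
  intros Hi.
  destruct (bool_value_exists (S i) FTrans) as [b HXb]; [discriminate | lia |].
  destruct (fluent_succ_supported bc_typed_dynamic HX _ _ _ HXb)
    as [L [HL [Hhead [Hafter _]]]].
  destruct HL as [| | | | | | | | | t |]; simpl in Hhead; try discriminate.
  exists t; exact (Forall_inv Hafter).
Qed.

Lemma action_unique i t s : i < ell -> X (at_ i (BA t)) -> X (at_ i (BA s)) -> s = t.
Proof.
  intros Hi Ht Hs; apply NNPP; intros Hts.
  apply (dynamic_constraint HX (DynamicLaw None [BA t; BA s] []) i);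
    [constructor; congruence | reflexivity | exact Hi | | constructor].
  repeat constructor; assumption.
Qed.

Hypothesis Hwr :
  forall t v l c, wr W t v = Some l -> In c l -> In c (dvals D (dm D v)).

Lemma Phi_eta_is_assignment i : is_assignment D (Phi_eta X i).
Proof.
  intros v c Hc; destruct (Phi_eta_some _ _ _ Hc) as [_ HXc].
  destruct (bc_value_in_dom _ _ _ HXc) as [Hnull | [c' [Hc' [t [l [Hwrt Hin]]]]]];
    [discriminate |].
  injection Hc' as <-; exact (Hwr t v l c Hwrt Hin).
Qed.

Lemma glit_atom_holds i l :
  i <= ell -> inV' W (glvar l) -> glsat (Phi_eta X i) l -> X (at_ i (glit_atom l)).
Proof.
  intros Hi Hv Hl; destruct l as [v o | v]; simpl in *.
  - exact (proj2 (Phi_eta_some _ _ _ Hl)).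
  - destruct (var_value_exists i v Hi Hv) as [x [Hdom HXx]].
    rewrite (Phi_eta_value i v x Hi Hv HXx) in Hl.
    destruct Hdom as [-> | [c [-> _]]]; [exact HXx | discriminate].
Qed.

Section Step.
Variables (i : nat) (t : trans W).
Hypotheses (Hi : i < ell) (Ht : X (at_ i (BA t))).

Let Hi_le : i <= ell. Proof. lia. Qed.
Let HSi_le : S i <= ell. Proof. lia. Qed.

Lemma Phi_M_pre_marked p : pre W p t -> Phi_M X i p > 0.
Proof.
  intros Hpre.
  destruct (bool_value_exists i (FPlace p)) as [b HXb]; [discriminate | exact Hi_le |].
  rewrite (Phi_M_value i p b Hi_le HXb).
  destruct b; [simpl; lia | exfalso].
  apply (dynamic_constraint HX (DynamicLaw None [BA t; BF (FPlace p) (VB false)] []) i);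
    [apply dyn_enabled, Hpre | reflexivity | exact Hi | | constructor].
  repeat constructor; assumption.
Qed.

Hypothesis Hdnf : chosen_neg_dnf W ngd.

Lemma Phi_eta_guard : gsat (Phi_eta X i) (gd W t).
Proof.
  apply NNPP; intros Hng.
  destruct (classic (guard_not_true W t)) as [Hg | Hg].
  - destruct (Hdnf t Hg) as [Hdnf_iff Hdnf_vars].
    destruct (proj1 (Hdnf_iff _ (Phi_eta_is_assignment i)) Hng) as [k [Hk Hsat]].
    apply (dynamic_constraint HX (DynamicLaw None (BA t :: map glit_atom k) []) i);
      [apply dyn_guard; assumption | reflexivity | exact Hi | | constructor].
    constructor; [exact Ht |].
    apply (proj2 (Forall_map glit_atom _ k)), Forall_forall; intros l Hl.
    exact (glit_atom_holds i l Hi_le (Hdnf_vars k l Hk Hl) (Hsat l Hl)).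
  - apply Hg; exists (Phi_eta X i); split; [apply Phi_eta_is_assignment | exact Hng].
Qed.

Lemma Phi_eta_unwritten v : wr W t v = None -> Phi_eta X (S i) v = Phi_eta X i v.
Proof.
  intros Hwrt; destruct (classic (inV' W v)) as [Hv | Hv].
  2: { rewrite !Phi_eta_outside; auto. }
  destruct (var_value_exists (S i) v HSi_le Hv) as [x [_ HXx]].
  destruct (var_succ_supported i v x HXx) as [HXx_i | [t' [Ht' Hwrt']]].
  - rewrite (Phi_eta_value (S i) v x), (Phi_eta_value i v x); auto.
  - rewrite (action_unique i t t' Hi Ht Ht') in Hwrt'; contradiction.
Qed.

Lemma Phi_eta_erased v : wr_empty W t v -> Phi_eta X (S i) v = None.
Proof.
  intros Hempty.
  assert (Hv : inV' W v)
    by (left; exists t; destruct Hempty as [l [Hwrt _]]; congruence).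
  apply (Phi_eta_value (S i) v VNull HSi_le Hv).
  apply (dynamic_law_fires HX (DynamicLaw (Some (FVar v, VNull)) [BA t] []) i);
    [apply dyn_delete, Hempty | reflexivity | exact Hi | | constructor].
  repeat constructor; assumption.
Qed.

Lemma Phi_eta_written v l c :
  wr W t v = Some l -> Phi_eta X (S i) v = Some c -> In c l.
Proof.
  intros Hwrt Hc; destruct (Phi_eta_some _ _ _ Hc) as [Hv HXc].
  destruct l as [| c0 l0].
  - rewrite Phi_eta_erased in Hc; [discriminate | exists []; split; auto].
  - apply NNPP; intros Hnotin.
    destruct (bc_value_in_dom _ _ _ HXc) as [Hnull | [c' [Hc' Hadm]]];
      [discriminate | injection Hc' as <-].
    apply (dynamic_constraint HX (DynamicLaw None [BA t] [BF (FVar v) (VC c)]) i);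
      [| reflexivity | exact Hi | repeat constructor; assumption |].
    + apply (dyn_write_excl W ngd t v _ _ Hwrt); [exists c0; left; reflexivity |].
      right; exists c; auto.
    + repeat constructor; intros Hneg; exact (stable_model_consistent HX _ HXc Hneg).
Qed.

Lemma Phi_eta_written_defined v : wr_nonempty W t v -> Phi_eta X (S i) v <> None.
Proof.
  intros [l [c0 [Hwrt Hc0]]].
  assert (Hv : inV' W v) by (left; exists t; congruence).
  destruct (var_value_exists (S i) v HSi_le Hv) as [x [Hdom HXx]].
  rewrite (Phi_eta_value (S i) v x HSi_le Hv HXx).
  destruct Hdom as [-> | [c [-> _]]]; [exfalso | discriminate].
  apply (dynamic_constraint HX (DynamicLaw None [BA t] [BF (FVar v) VNull]) i);
    [| reflexivity | exact Hi | repeat constructor; assumption |].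
  - apply (dyn_write_excl W ngd t v _ _ Hwrt);
      [exists c0; exact Hc0 | left; reflexivity].
  - repeat constructor; intros Hneg; exact (stable_model_consistent HX _ HXx Hneg).
Qed.

Lemma Phi_eta_update : assignment_update W (Phi_eta X i) t (Phi_eta X (S i)).
Proof.
  split; [| split; [exact Phi_eta_written | exact Phi_eta_unwritten]].
  intros v; destruct (wr W t v) as [[| c0 l0] |] eqn:Hwrt.
  - assert (Hempty : wr_empty W t v) by (exists []; split; auto).
    rewrite (Phi_eta_erased v Hempty); tauto.
  - assert (Hne : wr_nonempty W t v) by (exists (c0 :: l0), c0; split; simpl; auto).
    assert (Hnempty : ~ wr_empty W t v).
    { intros [l [Hl Hnone]]; rewrite Hwrt in Hl; injection Hl as <-.
      exact (Hnone c0 (or_introl eq_refl)). }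
    assert (Hdef := Phi_eta_written_defined v Hne); tauto.
  - rewrite (Phi_eta_unwritten v Hwrt).
    assert (Hnone : ~ wr_nonempty W t v /\ ~ wr_empty W t v)
      by (split; [intros [l [c [Hl _]]] | intros [l [Hl _]]]; congruence).
    tauto.
Qed.

Lemma Phi_M_consumed p : pre W p t -> ~ post W t p -> Phi_M X (S i) p = 0.
Proof.
  intros Hpre Hpost; apply (Phi_M_value (S i) p false HSi_le).
  apply (dynamic_law_fires HX (DynamicLaw (Some (FPlace p, VB false)) [BA t] []) i);
    [apply dyn_consume; assumption | reflexivity | exact Hi | | constructor].
  repeat constructor; assumption.
Qed.

Lemma Phi_M_produced p : post W t p -> ~ pre W p t -> Phi_M X (S i) p = 1.
Proof.
  intros Hpost Hpre; apply (Phi_M_value (S i) p true HSi_le).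
  apply (dynamic_law_fires HX (DynamicLaw (Some (FPlace p, VB true)) [BA t] []) i);
    [apply dyn_produce; assumption | reflexivity | exact Hi | | constructor].
  repeat constructor; assumption.
Qed.

Lemma Phi_M_untouched p :
  ~ (pre W p t /\ ~ post W t p) -> ~ (post W t p /\ ~ pre W p t) ->
  Phi_M X (S i) p = Phi_M X i p.
Proof.
  intros Hnconsumed Hnproduced.
  destruct (bool_value_exists (S i) (FPlace p)) as [b HXb];
    [discriminate | exact HSi_le |].
  destruct (place_succ_supported i p b HXb) as [HXb_i | [t' [Ht' Hchange]]].
  - rewrite (Phi_M_value (S i) p b), (Phi_M_value i p b); auto.
  - rewrite (action_unique i t t' Hi Ht Ht') in Hchange; tauto.
Qed.

Lemma Phi_M_update :
  (forall p, post W t p -> ~ pre W p t -> Phi_M X i p = 0) ->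
  marking_update W (Phi_M X i) t (Phi_M X (S i)).
Proof.
  intros Hunmarked p; split; [| split; [| exact (Phi_M_untouched p)]].
  - intros [Hpre Hpost]; rewrite (Phi_M_consumed p Hpre Hpost).
    assert (Hmarked := Phi_M_pre_marked p Hpre).
    assert (Hbool := Phi_M_boolean i p); lia.
  - intros [Hpost Hpre].
    rewrite (Phi_M_produced p Hpost Hpre), (Hunmarked p Hpost Hpre); reflexivity.
Qed.

Hypothesis Hsafe : one_safe W.

Lemma Phi_firing :
  reachable W (Phi_M X i) (Phi_eta X i) ->
  valid_firing W (Phi_M X i) (Phi_eta X i) t (Phi_M X (S i)) (Phi_eta X (S i)).
Proof.
  intros Hreach.
  apply valid_firingI;
    [exact Phi_M_pre_marked | exact Phi_eta_guard | | exact Phi_eta_update].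
  apply Phi_M_update; intros p.
  exact (one_safe_postset_unmarked _ _ _ _ p Hsafe Hreach
           Phi_M_pre_marked Phi_eta_guard Phi_eta_update).
Qed.

End Step.

Lemma Phi_reachable :
  chosen_neg_dnf W ngd -> one_safe W ->
  forall i, i <= ell -> reachable W (Phi_M X i) (Phi_eta X i).
Proof.
  intros Hdnf Hsafe i; induction i as [| i IH]; intros Hi.
  - apply reach_init.
    + exact (Phi_M_value 0 (start W) true Hi (initially_holds HX _ _ (init_start W))).
    + intros p Hp.
      exact (Phi_M_value 0 p false Hi (initially_holds HX _ _ (init_place W p Hp))).
    + intros v; destruct (classic (inV' W v)) as [Hv | Hv].
      * exact (Phi_eta_value 0 v VNull Hi Hv
                 (initially_holds HX _ _ (init_var W v Hv))).
      * exact (Phi_eta_outside 0 v Hv).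
  - destruct (action_exists i) as [t Ht]; [lia |].
    assert (Hreach := IH (Nat.lt_le_incl _ _ Hi)).
    exact (reach_step W _ _ t _ _ Hreach (Phi_firing i t Hi Ht Hdnf Hsafe Hreach)).
Qed.

End Encoding.

Theorem mainTheorem6 :
  forall (D : data_model) (W : dawnet D)
         (ngd : trans W -> list (list (glit D))) (ell : nat)
         (X : bclit W -> Prop),
    is_dawnet W ->
    one_safe W ->
    chosen_neg_dnf W ngd ->
    stable_model (P_ell (bc W ngd) ell) X ->
    forall i, i < ell ->
      exists t, tau_is X i t /\ (forall s, tau_is X i s -> s = t) /\
        valid_firing W (Phi_M X i) (Phi_eta X i) t
                       (Phi_M X (S i)) (Phi_eta X (S i)).
Proof.
  intros D W ngd ell X Hdaw Hsafe Hdnf HX i Hi.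
  destruct Hdaw as [_ [_ [[lt Hlt] [_ [_ [_ [Hwr _]]]]]]].
  destruct (action_exists HX i Hi) as [t Ht].
  exists t; split; [exact Ht | split].
  - intros s Hs; exact (action_unique HX i t s Hi Ht Hs).
  - exact (Phi_firing HX lt Hlt Hwr i t Hi Ht Hdnf Hsafe
             (Phi_reachable HX lt Hlt Hwr Hdnf Hsafe i (Nat.lt_le_incl _ _ Hi))).
Qed.
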